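(* Let $G$ be a connected graph of order $n$ with minimum degree $\delta=\delta(G)\geq 1+\sqrt{3n+4}$. Then $$prc(G)-rc(G)\geq \delta-\Big(\frac{3n}{\delta+1}+3\Big).$$
   Context: A path in an edge-coloured graph is a rainbow path if its edges receive pairwise distinct colours. The rainbow connection number $rc(G)$ of a connected graph $G$ is the minimum number of colours in an edge-colouring such that every two distinct vertices are joined by a rainbow path. The proper rainbow connection number $prc(G)$ is the minimum number of colours in a proper edge-colouring (adjacent edges get distinct colours) such that every two distinct vertices are joined by a rainbow path. *)

From mathcomp Require Import all_boot all_order all_algebra.
Set Implicit Arguments. Unset Strict Implicit. Unset Printing Implicit Defensive.

Definition simple_graph (T : finType) (e : rel T) : Prop :=
  symmetric e /\ irreflexive e.

Definition connected_graph (T : finType) (e : rel T) : Prop :=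
  forall x y : T, connect e x y.

Definition deg (T : finType) (e : rel T) (x : T) : nat := #|[set y | e x y]|.

Definition is_min_degree (T : finType) (e : rel T) (delta : nat) : Prop :=
  (forall x, delta <= deg e x) /\ (exists x, deg e x = delta).

Definition edge_colouring (T : finType) (e : rel T) (k : nat) (c : T -> T -> nat) : Prop :=
  forall x y, e x y -> c x y = c y x /\ c x y < k.

Definition proper_colouring (T : finType) (e : rel T) (c : T -> T -> nat) : Prop :=
  forall x y z, e x y -> e x z -> y != z -> c x y != c x z.

Definition rainbow_path (T : finType) (e : rel T) (c : T -> T -> nat)
  (x y : T) (p : seq T) : bool :=
  [&& path e x p, uniq (x :: p), last x p == y & uniq (pairmap c x p)].

Definition rainbow_connected (T : finType) (e : rel T) (c : T -> T -> nat) : Prop :=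
  forall x y, x != y -> exists p, rainbow_path e c x y p.

Definition rc_colourable (T : finType) (e : rel T) (k : nat) : Prop :=
  exists c, edge_colouring e k c /\ rainbow_connected e c.

Definition prc_colourable (T : finType) (e : rel T) (k : nat) : Prop :=
  exists c, [/\ edge_colouring e k c, proper_colouring e c & rainbow_connected e c].

Definition is_minimum (P : nat -> Prop) (k : nat) : Prop :=
  P k /\ forall k', P k' -> k <= k'.

Definition is_rc (T : finType) (e : rel T) (r : nat) : Prop :=
  is_minimum (rc_colourable e) r.
Definition is_prc (T : finType) (e : rel T) (r : nat) : Prop :=
  is_minimum (prc_colourable e) r.

(* A proper colouring spends [delta] distinct colours at a vertex of minimum
   degree, so [prc >= delta]; it remains to show [rc <= 3n/(delta+1) + 3].
   Grow a connected set [D], coloured along a spanning tree with [|D| - 1]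
   colours so that any two vertices of [D] are joined by a rainbow path inside
   [D]: while some vertex is at distance 3 from [D], add a path of three
   vertices towards it; while some vertex of the first layer has a single
   neighbour in [D] and none in the first layer, add it.  A step adding [t]
   vertices claims at least [t(delta+1)/3] new vertices (the closed
   neighbourhood of the far vertex, resp. the [delta - 1] outer neighbours of
   the added one, using [delta >= 2]), so in the end [|D| + 2 <= 3n/(delta+1)].
   Six more colours on the edges between [D] and the two outer layers, split
   by two maximum cuts of the layers, give every vertex [v] a walk into [D]
   with two colours determined by [v], and every vertex [u] a walk into [D]
   avoiding any two such colours; joining the two walks through [D] gives a
   rainbow path, so [rc <= |D| + 5]. *)

From mathcomp Require Import all_boot all_order all_algebra zify lra.
Import Order.TTheory GRing.Theory Num.Theory.
Set Implicit Arguments. Unset Strict Implicit. Unset Printing Implicit Defensive.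

Lemma uniq_map_subset (A B : eqType) (f : A -> B) (s t : seq A) :
  uniq (map f s) -> {subset t <= s} -> uniq t -> uniq (map f t).
Proof.
move=> ufs ts ut; have us := map_uniq ufs.
have pt : perm_eq t [seq x <- s | x \in t].
  apply: uniq_perm; rewrite ?filter_uniq // => x.
  by rewrite mem_filter; case xt: (x \in t); rewrite //= ts.
by rewrite (perm_uniq (perm_map f pt)) (subseq_uniq _ ufs) ?map_subseq ?filter_subseq.
Qed.

Lemma bool_neq2_eq (x y z : bool) : x != y -> y != z -> x = z.
Proof. by case: x; case: y; case: z. Qed.

Section Walks.
Variable T : eqType.
Implicit Types (x y : T) (p : seq T).

Lemma path_edges (r : rel T) x p :
  path r x p = all (fun xy => r xy.1 xy.2) (pairmap pair x p).
Proof. by elim: p x => //= y p IH x; rewrite IH. Qed.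

Lemma pairmap_edges (A : Type) (f : T -> T -> A) x p :
  pairmap f x p = map (fun xy => f xy.1 xy.2) (pairmap pair x p).
Proof. by elim: p x => //= y p IH x; rewrite IH. Qed.

Lemma edge_fst_mem x p xy : xy \in pairmap pair x p -> xy.1 \in x :: p.
Proof.
elim: p x => //= y p IH x; rewrite inE => /predU1P[-> | /IH]; first by rewrite inE eqxx.
by rewrite inE => ->; rewrite orbT.
Qed.

Lemma uniq_edges x p : uniq (x :: p) -> uniq (pairmap pair x p).
Proof.
elim: p x => //= y p IH x /andP[]; rewrite inE negb_or => /andP[xy xp] uyp.
rewrite IH // andbT; apply: contraL xy => /edge_fst_mem /=.
by rewrite inE (negbTE xp) orbF negbK.
Qed.

Lemma last_rev x p : last x (rev p) = head x p.
Proof. by case: p => //= y p; rewrite rev_cons last_rcons. Qed.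

Lemma last_rev_belast x p : last (last x p) (rev (belast x p)) = x.
Proof. by rewrite last_rev; case: p. Qed.

Lemma pairmap_rev_belast (A : Type) (f : T -> T -> A) x p :
  (forall a b, f a b = f b a) ->
  pairmap f (last x p) (rev (belast x p)) = rev (pairmap f x p).
Proof.
move=> fC; elim: p x => //= y p IH x.
rewrite rev_cons -cats1 pairmap_cat IH rev_cons -cats1 last_rev /=.
by case: p {IH} => [|z p] /=; rewrite (fC y x).
Qed.

End Walks.

(* [shortenP] for the relation "is a step of the walk" removes the loops
   without using new edges, hence without new colours. *)
Lemma rainbow_path_of_walk (T : finType) (e : rel T) (c : T -> T -> nat) x y p :
  path e x p -> last x p = y -> x != y -> uniq (pairmap c x p) ->
  exists q, rainbow_path e c x y q /\ {subset q <= p}.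
Proof.
move=> ep lp xy uc; pose E := pairmap pair x p.
have pE : path (fun a b => (a, b) \in E) x p by rewrite path_edges; apply/allP => -[a b].
case: (shortenP pE) lp => q qE uq qp lq.
have qEsub : {subset pairmap pair x q <= E} by move: qE; rewrite path_edges => /allP H [a b] /H.
exists q; split=> //; rewrite /rainbow_path uq lq eqxx /=.
apply/andP; split.
  by rewrite path_edges; apply/allP => ab /qEsub; move: ep; rewrite path_edges => /allP; apply.
rewrite pairmap_edges (uniq_map_subset _ qEsub) ?uniq_edges //.
by rewrite -pairmap_edges.
Qed.

Section Graph.
Variables (T : finType) (e : rel T).
Hypotheses (eC : symmetric e) (e_irr : irreflexive e).
Implicit Types (A B D P Q : {set T}) (c : T -> T -> nat).

Lemma rainbow_path_rev c x y p : (forall a b, c a b = c b a) ->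
  rainbow_path e c x y p -> rainbow_path e c y x (rev (belast x p)).
Proof.
move=> cC /and4P[ep up /eqP lp uc]; apply/and4P; split.
- by rewrite -lp rev_path (eq_path (e' := e)).
- by rewrite -lp -rev_rcons -lastI rev_uniq.
- by rewrite -lp last_rev_belast.
- by rewrite -lp pairmap_rev_belast // rev_uniq.
Qed.

Definition rainbow_on D c k :=
  [/\ forall x y, c x y = c y x,
      {in D &, forall x y, e x y -> c x y < k} &
      {in D &, forall x y, x != y ->
        exists2 p, rainbow_path e c x y p & {subset p <= D}}].

Lemma rainbow_on_walk D c k x y : rainbow_on D c k -> x \in D -> y \in D ->
  exists q, [/\ path e x q, last x q = y, {subset q <= D},
                uniq (pairmap c x q) & all (fun i => i < k) (pairmap c x q)].
Proof.
move=> [_ ck cD] xD yD; have [<-|xy] := eqVneq x y; first by exists [::].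
have [q /and4P[eq _ /eqP lq uq] qD] := cD x y xD yD xy; exists q; split=> //.
clear lq uq xy; elim: q x xD eq qD => //= z q IH x xD /andP[exz ezq] qD.
have zD : z \in D by apply: qD; rewrite mem_head.
by rewrite ck //= IH // => w wq; apply: qD; rewrite inE wq orbT.
Qed.

Lemma pairmap_eq_in D c c' x p : {in D &, forall a b, c' a b = c a b} ->
  x \in D -> {subset p <= D} -> pairmap c' x p = pairmap c x p.
Proof.
move=> cc'; elim: p x => //= y p IH x xD pD.
have yD : y \in D by apply: pD; rewrite mem_head.
by rewrite cc' // IH // => w wp; apply: pD; rewrite inE wp orbT.
Qed.

Lemma rainbow_on_add D c k v p : rainbow_on D c k -> v \notin D -> p \in D -> e v p ->
  exists c', rainbow_on (v |: D) c' k.+1.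
Proof.
move=> cD vD pD evp; have [cC ck _] := cD.
pose c' x y := if (x == v) || (y == v) then (if (x == p) || (y == p) then k else 0) else c x y.
have notv z : z \in D -> (z == v) = false by move=> zD; apply: contraNF vD => /eqP <-.
have cc' : {in D &, forall a b, c' a b = c a b} by move=> a b aD bD; rewrite /c' !notv.
have from_v y : y \in D -> exists2 q, rainbow_path e c' v y q & {subset q <= v |: D}.
  move=> yD; have [q [eq lq qD uq ltq]] := rainbow_on_walk cD pD yD.
  have vy : v != y by apply: contraNneq vD => ->.
  have ew : path e v (p :: q) by rewrite /= evp.
  have uw : uniq (pairmap c' v (p :: q)).
    rewrite /= (pairmap_eq_in cc') // uq andbT /c' !eqxx !orbT.
    by apply/negP => /(allP ltq); rewrite ltnn.
  have [r [rr rq]] := rainbow_path_of_walk ew lq vy uw.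
  exists r => // z /rq; rewrite !inE => /predU1P[-> | /qD ->]; by rewrite ?pD orbT.
have c'C x y : c' x y = c' y x by rewrite /c' [(y == v) || _]orbC [(y == p) || _]orbC cC.
exists c'; split=> //.
- move=> x y; rewrite !inE => xD yD exy; rewrite /c'.
  case: ifP => [_ | /norP[/negbTE xv /negbTE yv]]; first by case: ifP.
  by move: xD yD; rewrite xv yv => xD yD; rewrite ltnS ltnW // ck.
move=> x y; rewrite !inE => /predU1P[-> | xD] /predU1P[-> | yD] xy.
- by rewrite eqxx in xy.
- exact: from_v.
- have [q qr qD] := from_v x xD; exists (rev (belast v q)); first exact: rainbow_path_rev.
  by move=> z; rewrite mem_rev => /mem_belast; rewrite inE => /predU1P[-> | /qD]; rewrite ?setU11.
- have [_ _ cD'] := cD; have [q qr qD] := cD' x y xD yD xy.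
  exists q; last by move=> z /qD; apply: setU1r.
  by rewrite /rainbow_path (pairmap_eq_in cc').
Qed.

Definition nbhd A := [set y | [exists a in A, e y a]].
Definition closed_nbhd A := A :|: nbhd A.
Definition layer1 D := nbhd D :\: D.
Definition anchor A x := odflt x [pick a in A | e x a].
Definition sole_anchor A x := [forall a in A, e x a ==> (a == anchor A x)].

Definition two_step_dominating D := forall v, v \in closed_nbhd (closed_nbhd D).
Definition layer2 D := ~: (D :|: layer1 D).
Definition lonely D x :=
  [&& x \in layer1 D, sole_anchor D x & [forall y in layer1 D, ~~ e x y]].

Lemma nbhdP A y : reflect (exists2 a, a \in A & e y a) (y \in nbhd A).
Proof. by rewrite inE; apply: (iffP exists_inP). Qed.

Lemma mem_closed_nbhd A x y : x \in A -> e y x -> y \in closed_nbhd A.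
Proof. by move=> xA eyx; rewrite inE; apply/orP; right; apply/nbhdP; exists x. Qed.

Lemma closed_nbhdS A B : A \subset B -> closed_nbhd A \subset closed_nbhd B.
Proof.
move=> AB; apply: setUSS => //; apply/subsetP => y /nbhdP[a aA eya].
by apply/nbhdP; exists a; first exact: (subsetP AB).
Qed.

Lemma anchorP A x : x \in nbhd A -> anchor A x \in A /\ e x (anchor A x).
Proof.
move=> /nbhdP[a aA exa]; rewrite /anchor; case: pickP => [b /andP[] // | /(_ a)].
by rewrite aA exa.
Qed.

Lemma closed_nbhd1_sub A x : x \in A -> x |: [set y | e x y] \subset closed_nbhd A.
Proof.
move=> xA; apply/subsetP => y; rewrite in_setU1 inE => /predU1P[-> | exy].
  by rewrite in_setU xA.
by apply: mem_closed_nbhd xA _; rewrite eC.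
Qed.

Lemma setU1_sub_closed_nbhd A x a : a \in A -> e x a -> x |: A \subset closed_nbhd A.
Proof. by move=> aA exa; rewrite subUset sub1set (mem_closed_nbhd aA exa) subsetUl. Qed.

Definition rainbow_spanned D := exists c, rainbow_on D c #|D|.-1.

Lemma rainbow_spanned1 x : rainbow_spanned [set x].
Proof.
exists (fun _ _ => 0); split=> // y z; rewrite !inE => /eqP-> /eqP->.
  by rewrite e_irr.
by rewrite eqxx.
Qed.

Lemma rainbow_spanned_add D v p : rainbow_spanned D -> v \notin D -> p \in D -> e v p ->
  rainbow_spanned (v |: D).
Proof.
move=> [c cD] vD pD evp; have [c' c'D] := rainbow_on_add cD vD pD evp.
have D_gt0 : 0 < #|D| by apply/card_gt0P; exists p.
by exists c'; rewrite cardsU1 vD add1n /= -(prednK D_gt0).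
Qed.

Lemma max_cut_cross_neighbour A : exists s : T -> bool, forall x, x \in A ->
  (exists2 y, y \in A & e x y) -> exists2 y, y \in A & e x y /\ s y != s x.
Proof.
pose cut (f : {ffun T -> bool}) :=
  #|[set xy : T * T | [&& xy.1 \in A, xy.2 \in A, e xy.1 xy.2 & f xy.1 != f xy.2]]|.
have [f _ f_max] := @arg_maxnP _ [ffun=> false] predT cut isT.
exists f => x xA [y0 y0A exy0].
have [/exists_inP[y yA /andP[exy fyx]] | /exists_inPn same] :=
  boolP [exists y in A, e x y && (f y != f x)]; first by exists y.
exfalso.
(* Moving [x] to the other side keeps every cut edge and adds the edge [x y0]. *)
pose g : {ffun T -> bool} := [ffun y => if y == x then ~~ f x else f y].
have gE y : g y = if y == x then ~~ f x else f y by rewrite ffunE.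
have same_y y : y \in A -> e x y -> f y = f x.
  by move=> yA exy; apply/eqP; move: (same y yA); rewrite exy negbK.
suff /(leq_ltn_trans (f_max g isT)) : cut f < cut g by rewrite ltnn.
apply: proper_card; apply/properP; split.
  apply/subsetP => -[a b]; rewrite !inE /= => /and4P[aA bA eab fab].
  rewrite aA bA eab !gE /=.
  have [ax | ax] := eqVneq a x; first by subst a; rewrite (same_y b) ?eqxx in fab.
  have [bx | bx] := eqVneq b x; first by subst b; move: fab; rewrite (same_y a) ?eqxx // eC.
  exact: fab.
have y0x : (y0 == x) = false by apply: contraTF exy0 => /eqP->; rewrite e_irr.
exists (x, y0); rewrite !inE /= xA y0A exy0 /=.
  by rewrite !gE eqxx y0x (same_y y0) //; case: (f x).
by rewrite (same_y y0) // eqxx.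
Qed.

Section Layers.
Variable D : {set T}.
Hypothesis D_dom : two_step_dominating D.

Lemma layer1_notin x : x \in layer1 D -> x \notin D.
Proof. by rewrite inE => /andP[]. Qed.

Lemma layer2_notin u : u \in layer2 D -> (u \notin D) && (u \notin layer1 D).
Proof. by rewrite !inE negb_or. Qed.

Lemma layer1_anchorP x : x \in layer1 D -> anchor D x \in D /\ e x (anchor D x).
Proof. by rewrite inE => /andP[_ /anchorP]. Qed.

Lemma layer2_not_nbhd u : u \in layer2 D -> u \notin nbhd D.
Proof. by move=> /layer2_notin /andP[uD]; rewrite in_setD uD. Qed.

Lemma layer2_anchorP u : u \in layer2 D ->
  anchor (layer1 D) u \in layer1 D /\ e u (anchor (layer1 D) u).
Proof.
move=> u2; have /andP[uD _] := layer2_notin u2; apply: anchorP.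
have uD1 : u \notin closed_nbhd D by rewrite in_setU negb_or uD layer2_not_nbhd.
move: (D_dom u); rewrite in_setU (negbTE uD1) => /nbhdP[w wD1 euw].
apply/nbhdP; exists w => //; rewrite inE.
have wD : w \notin D by apply: contra (layer2_not_nbhd u2) => wD; apply/nbhdP; exists w.
by move: wD1; rewrite in_setU (negbTE wD) /= => ->.
Qed.

Lemma layer2_sole_anchor_nbr u : (forall x, 1 < deg e x) -> u \in layer2 D ->
  sole_anchor (layer1 D) u -> exists2 y, y \in layer2 D & e u y.
Proof.
move=> deg_gt1 u2 /forall_inP sole.
have := deg_gt1 u; rewrite /deg (cardsD1 (anchor (layer1 D) u)) => deg_u.
have /card_gt0P[y] : 0 < #|[set y | e u y] :\ anchor (layer1 D) u|.
  by move: deg_u; case: (_ \in _); rewrite /= ?add1n ?add0n // => /ltnW.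
rewrite !inE => /andP[ya euy]; exists y => //; rewrite in_setC in_setU negb_or.
have yD : y \notin D by apply: contra (layer2_not_nbhd u2) => yD; apply/nbhdP; exists y.
by rewrite yD /=; apply: contra ya => yN1; exact: implyP (sole y yN1) euy.
Qed.

End Layers.

Section Colouring.
Variables (D : {set T}) (c : T -> T -> nat) (k : nat) (tau sig : T -> bool).
Hypothesis cD : rainbow_on D c k.
Hypothesis D_dom : two_step_dominating D.
Hypothesis tauP : forall x, x \in layer1 D -> sole_anchor D x ->
  exists2 y, y \in layer1 D & e x y /\ tau y != tau x.
Hypothesis sigP : forall u, u \in layer2 D -> sole_anchor (layer1 D) u ->
  exists2 y, y \in layer2 D & e u y /\ sig y != sig u.

(* Six colours beyond those of [c]: [fresh b] and [fresh (3 + b)] on edges from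
   layer 1 to [D] and from layer 2 to layer 1, [fresh 2] inside layer 1 and
   [fresh 5] inside layer 2.  An edge to the anchor takes the side ([tau] or
   [sig]) of its outer end, the other edges the opposite side. *)
Definition fresh i := k + i.

Definition edge01 x d := fresh (if d == anchor D x then tau x else ~~ tau x).
Definition edge12 u w := fresh (3 + (if w == anchor (layer1 D) u then sig u else ~~ sig u)).

Definition layered_colouring x y :=
  if x \in D then
    (if y \in D then c x y else if y \in layer1 D then edge01 y x else fresh 5)
  else if x \in layer1 D then
    (if y \in D then edge01 x y else if y \in layer1 D then fresh 2 else edge12 y x)
  else (if y \in D then fresh 5 else if y \in layer1 D then edge12 x y else fresh 5).

Local Notation C := layered_colouring.

Lemma layered_colouringC x y : C x y = C y x.
Proof.
have [cC _ _] := cD.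
by rewrite /C; case: (x \in D); case: (y \in D); case: (x \in layer1 D);
  case: (y \in layer1 D) => //; apply: cC.
Qed.

Lemma layered_colouring_lt x y : e x y -> C x y < k + 6.
Proof.
have [_ ck _] := cD => exy.
have fresh_lt i : i < 6 -> fresh i < k + 6 by rewrite ltn_add2l.
have fresh01 a d : edge01 a d < k + 6 by rewrite fresh_lt //; case: ifP; case: (tau a).
have fresh12 a d : edge12 a d < k + 6 by rewrite fresh_lt //; case: ifP; case: (sig a).
rewrite /C; case xD: (x \in D); case yD: (y \in D); first by rewrite ltn_addr // ck.
all: by do 2?case: ifP => _; rewrite ?fresh01 ?fresh12 ?fresh_lt.
Qed.

Lemma layered_colouring_D x y : x \in D -> y \in D -> C x y = c x y.
Proof. by rewrite /C => -> ->. Qed.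

Lemma layered_colouring01 x d : x \in layer1 D -> d \in D -> C x d = edge01 x d.
Proof. by move=> x1 dD; rewrite /C (negbTE (layer1_notin x1)) x1 dD. Qed.

Lemma layered_colouring11 x y : x \in layer1 D -> y \in layer1 D -> C x y = fresh 2.
Proof.
move=> x1 y1.
by rewrite /C (negbTE (layer1_notin x1)) (negbTE (layer1_notin y1)) x1 y1.
Qed.

Lemma layered_colouring12 u w : u \in layer2 D -> w \in layer1 D -> C u w = edge12 u w.
Proof.
move=> /layer2_notin /andP[/negbTE uD /negbTE u1] w1.
by rewrite /C uD u1 (negbTE (layer1_notin w1)) w1.
Qed.

Lemma layered_colouring22 u v : u \in layer2 D -> v \in layer2 D -> C u v = fresh 5.
Proof.
move=> /layer2_notin /andP[/negbTE uD /negbTE u1] /layer2_notin /andP[/negbTE vD /negbTE v1].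
by rewrite /C uD u1 vD v1.
Qed.

Definition route u (s : seq nat) := exists r,
  [/\ path e u r, last u r \in D, uniq (pairmap C u r) & {subset pairmap C u r <= map fresh s}].

Lemma route_D d s : d \in D -> route d s.
Proof. by exists [::]. Qed.

Lemma route_sub u s s' : route u s -> {subset s <= s'} -> route u s'.
Proof.
move=> [r [er lr ur sr]] ss'; exists r; split=> // i /sr /mapP[j js ->].
by rewrite map_f ?ss'.
Qed.

Lemma route_cons u w s i : route w s -> e u w -> C u w = fresh i -> i \notin s ->
  route u (i :: s).
Proof.
move=> [r [er lr ur sr]] euw Cuw si; exists (w :: r); split=> /=; rewrite ?euw ?Cuw //.
  by rewrite ur andbT; apply: contra si => /sr; rewrite mem_map //; apply: addnI.
by move=> j; rewrite inE => /predU1P[-> | /sr js]; rewrite inE ?eqxx ?js ?orbT.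
Qed.

Lemma route_anchor y : y \in layer1 D -> route y [:: nat_of_bool (tau y)].
Proof.
move=> y1; have [aD eya] := layer1_anchorP y1.
apply: route_cons (route_D [::] aD) eya _ _ => //.
by rewrite layered_colouring01 // /edge01 eqxx.
Qed.

Lemma route_layer1 x (a : bool) : x \in layer1 D -> route x [:: nat_of_bool a; 2].
Proof.
move=> x1; have [<- | tax] := eqVneq (tau x) a.
  by apply: route_sub (route_anchor x1) _ => i; rewrite !inE => ->.
have [/exists_inP[d dD /andP[exd da]] | /exists_inPn sole] :=
  boolP [exists d in D, e x d && (d != anchor D x)].
  have Cxd : C x d = fresh a.
    by rewrite layered_colouring01 // /edge01 (negbTE da); case: (tau x) tax; case: a.
  by apply: route_sub (route_cons (route_D [::] dD) exd Cxd _) _ => // i; rewrite !inE => ->.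
have /tauP[//| y y1 [exy tyx]] : sole_anchor D x.
  by apply/forall_inP => d dD; move: (sole d dD); case: (e x d); case: (d == _).
have tya : tau y = a := bool_neq2_eq tyx tax.
apply: route_sub (route_cons (route_anchor y1) exy (layered_colouring11 x1 y1) _) _.
  by rewrite inE; case: (tau y).
by move=> i; rewrite !inE tya => /orP[] ->; rewrite ?orbT.
Qed.

Lemma layer2_edge_side u (b : bool) : u \in layer2 D ->
  ~~ sole_anchor (layer1 D) u \/ sig u = b ->
  exists2 w, w \in layer1 D & e u w /\ C u w = fresh (3 + b).
Proof.
move=> u2 sole_or_b; have [<- | sb] := eqVneq (sig u) b.
  have [a1 eua] := layer2_anchorP D_dom u2.
  by exists (anchor (layer1 D) u); rewrite ?layered_colouring12 // /edge12 eqxx.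
case: sole_or_b => [/forall_inPn[w w1] | /eqP]; last by rewrite (negbTE sb).
rewrite negb_imply => /andP[euw wa]; exists w => //; split=> //.
by rewrite layered_colouring12 // /edge12 (negbTE wa); case: (sig u) sb; case: b.
Qed.

Lemma route_layer2_side u (a b : bool) : u \in layer2 D ->
  ~~ sole_anchor (layer1 D) u \/ sig u = b -> route u [:: 3 + b; nat_of_bool a; 2].
Proof.
move=> u2 /(layer2_edge_side u2)[w w1 [euw Cuw]].
apply: route_cons (route_layer1 a w1) euw Cuw _.
by rewrite !inE; case: a; case: b.
Qed.

Lemma route_layer2 u (a b : bool) : u \in layer2 D -> route u [:: 5; 3 + b; nat_of_bool a; 2].
Proof.
have out5 : 5 \notin [:: 3 + b; nat_of_bool a; 2] by case: a; case: b.
move=> u2; have [sole | nsole] := boolP (sole_anchor (layer1 D) u); last first.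
  apply: route_sub (@route_layer2_side u a b u2 (or_introl nsole)) _.
  by move=> i si; rewrite in_cons si orbT.
have [ub | ub] := eqVneq (sig u) b.
  apply: route_sub (route_layer2_side a u2 (or_intror ub)) _.
  by move=> i si; rewrite in_cons si orbT.
have [u' u'2 [euu' su']] := sigP u2 sole.
have u'b : sig u' = b := bool_neq2_eq su' ub.
have Cuu' := layered_colouring22 u2 u'2.
exact: route_cons (route_layer2_side a u'2 (or_intror u'b)) euu' Cuu' out5.
Qed.

Definition side v := if v \in layer1 D then tau v else tau (anchor (layer1 D) v).

Lemma route_direct v : route v [:: nat_of_bool (side v); 3 + sig v].
Proof.
case vD: (v \in D); first exact: route_D.
case v1: (v \in layer1 D).
  by apply: route_sub (route_anchor v1) _ => i; rewrite /side v1 !inE => ->.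
have v2 : v \in layer2 D by rewrite in_setC in_setU vD v1.
have [w1 evw] := layer2_anchorP D_dom v2.
have Cvw : C v (anchor (layer1 D) v) = fresh (3 + sig v).
  by rewrite layered_colouring12 // /edge12 eqxx.
apply: route_sub (route_cons (route_anchor w1) evw Cvw _) _.
  by rewrite inE; case: (tau _); case: (sig v).
by move=> i; rewrite /side v1 !inE => /orP[] ->; rewrite ?orbT.
Qed.

Lemma route_any u (a b : bool) : route u [:: 5; 3 + b; nat_of_bool a; 2].
Proof.
case uD: (u \in D); first exact: route_D.
case u1: (u \in layer1 D); last by apply: route_layer2; rewrite in_setC in_setU uD u1.
by apply: route_sub (route_layer1 a u1) _ => i; rewrite !inE => /orP[] ->; rewrite ?orbT.
Qed.

(* The walk runs along the route of [u], through [D] and back along the route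
   of [v]; the three stretches use pairwise disjoint colour sets. *)
Lemma rainbow_path_of_routes u v s1 s2 : route u s1 -> route v s2 ->
  ~~ has (mem s1) s2 -> u != v -> exists p, rainbow_path e C u v p.
Proof.
move=> [r1 [er1 l1 ur1 sr1]] [r2 [er2 l2 ur2 sr2]] s12 uv.
have [q [eq lq qD uq ltq]] := rainbow_on_walk cD l1 l2.
have cq : {in D &, forall a b, C a b = c a b} by move=> a b; apply: layered_colouring_D.
rewrite -(pairmap_eq_in cq) // in uq ltq.
have fresh_ge i s : i \in map fresh s -> k <= i by move=> /mapP[j _ ->]; apply: leq_addr.
pose w := r1 ++ q ++ rev (belast v r2).
have ew : path e u w.
  rewrite cat_path er1 cat_path eq lq rev_path /=.
  by rewrite (eq_path (e' := e)).
have lw : last u w = v by rewrite !last_cat lq last_rev_belast.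
have uw : uniq (pairmap C u w).
  have CC := layered_colouringC.
  rewrite !pairmap_cat lq pairmap_rev_belast // cat_uniq ur1 cat_uniq uq rev_uniq ur2.
  rewrite has_cat !has_rev /= negb_or andbT -andbA; apply/and3P; split.
  - apply/hasPn => i /(allP ltq) ik; apply/negP => /sr1 /fresh_ge.
    by rewrite leqNgt ik.
  - apply/hasPn => i /sr2 /mapP[j j2 ->]; apply/negP => /sr1.
    rewrite mem_map; last exact: addnI.
    by move=> j1; apply: (negP s12); apply/hasP; exists j.
  - apply/hasPn => i /sr2 /fresh_ge ki; apply/negP => /(allP ltq).
    by rewrite ltnNge ki.
by have [p [pr _]] := rainbow_path_of_walk ew lw uv uw; exists p.
Qed.

Lemma layered_colouring_rainbow :
  edge_colouring e (k + 6) C /\ rainbow_connected e C.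
Proof.
split=> [x y exy | u v uv].
  by split; [apply: layered_colouringC | apply: layered_colouring_lt].
apply: rainbow_path_of_routes (route_any u (~~ side v) (~~ sig v)) (route_direct v) _ uv.
by rewrite /= !inE; case: (side v); case: (sig v).
Qed.

End Colouring.

Lemma rc_colourable_layered D c k : rainbow_on D c k -> two_step_dominating D ->
  (forall x, ~~ lonely D x) -> (forall x, 1 < deg e x) -> rc_colourable e (k + 6).
Proof.
move=> cD D_dom nol deg_gt1.
have [tau tauP] := max_cut_cross_neighbour (layer1 D).
have [sig sigP] := max_cut_cross_neighbour (layer2 D).
have tauP' x : x \in layer1 D -> sole_anchor D x ->
    exists2 y, y \in layer1 D & e x y /\ tau y != tau x.
  move=> x1 sole; apply: tauP => //; move: (nol x); rewrite /lonely x1 sole /=.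
  by move=> /forall_inPn[y y1]; rewrite negbK; exists y.
have sigP' u : u \in layer2 D -> sole_anchor (layer1 D) u ->
    exists2 y, y \in layer2 D & e u y /\ sig y != sig u.
  by move=> u2 sole; apply: sigP => //; apply: layer2_sole_anchor_nbr.
have [ec rc] := layered_colouring_rainbow cD D_dom tauP' sigP'.
by exists (layered_colouring D c k tau sig).
Qed.

Lemma deg_le_colours k c x : edge_colouring e k c -> proper_colouring e c -> deg e x <= k.
Proof.
move=> ec pc; pose N := enum [set y | e x y].
have uN : uniq (map (c x) N).
  rewrite map_inj_in_uniq ?enum_uniq // => a b; rewrite !mem_enum !inE => exa exb cab.
  by apply/eqP; apply: contraT => ab; move: (pc x a b exa exb ab); rewrite cab eqxx.
have sub : {subset map (c x) N <= iota 0 k}.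
  move=> i /mapP[a]; rewrite mem_enum inE => exa ->.
  by rewrite mem_iota add0n; have [_ ->] := ec x a exa.
by have := uniq_leq_size uN sub; rewrite size_map size_iota /deg cardE.
Qed.

Lemma path_exit A x p : x \in A -> path e x p -> last x p \notin A ->
  exists z y, [/\ z \in A, y \notin A & e z y].
Proof.
elim: p x => [|y p IH] x /= xA; first by rewrite xA.
case/andP=> exy ep lp; case yA: (y \in A); first exact: IH yA ep lp.
by exists x, y; rewrite yA.
Qed.

Section Growth.
Variable delta : nat.
Hypotheses (deg_ge : forall x, delta <= deg e x) (delta_gt1 : 1 < delta).
Hypothesis e_conn : connected_graph e.

(* [P] collects vertices of the closed neighbourhood of [D] paid for during the
   growth of [D]; as [#|P| <= #|T|], it forces [#|D| + 2 <= 3 #|T| / (delta + 1)]. *)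
Definition rainbow_core D P :=
  [/\ rainbow_spanned D, D != set0, P \subset closed_nbhd D &
      delta.+1 * (#|D| + 2) <= 3 * #|P|].

Lemma rainbow_core_grow D P D' Q : rainbow_core D P ->
  rainbow_spanned D' -> D \subset D' -> Q \subset closed_nbhd D' -> [disjoint P & Q] ->
  delta.+1 * (#|D'| - #|D|) <= 3 * #|Q| -> rainbow_core D' (P :|: Q).
Proof.
move=> [_ D0 PD cardP] sD' DD' QD' PQ cardQ; split=> //.
- by apply: contraNneq D0 => D'0; rewrite -subset0 -D'0.
- by rewrite subUset QD' (subset_trans PD) ?closed_nbhdS.
have /eqP -> : #|P :|: Q| == #|P| + #|Q| by rewrite (leq_card_setU P Q).2.
have := subset_leq_card DD'; nia.
Qed.

Lemma delta_lt_card_closed_nbhd1 x : delta < #|x |: [set y | e x y]|.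
Proof. by rewrite cardsU1 inE e_irr add1n ltnS; apply: deg_ge. Qed.

Lemma rainbow_core1 x : rainbow_core [set x] (x |: [set y | e x y]).
Proof.
split; first exact: rainbow_spanned1.
- by apply/set0Pn; exists x; rewrite inE.
- exact: closed_nbhd1_sub (set11 x).
by rewrite cards1 mulnC leq_mul2l /= delta_lt_card_closed_nbhd1.
Qed.

Lemma third_layer_path D v : D != set0 -> v \notin closed_nbhd (closed_nbhd D) ->
  exists d x z y, [/\ d \in D, x \notin D, z \notin closed_nbhd D,
    y \notin closed_nbhd (closed_nbhd D) & [&& e x d, e z x & e y z]].
Proof.
move=> /set0Pn[d dD] vD.
have /connectP[p ep lp] := e_conn d v.
have dD2 : d \in closed_nbhd (closed_nbhd D) by rewrite !inE dD.
rewrite lp in vD; have [z [y [zD2 yD2 ezy]]] := path_exit dD2 ep vD.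
have zD1 : z \notin closed_nbhd D.
  by apply: contra yD2 => zD1; apply: mem_closed_nbhd zD1 _; rewrite eC.
move: zD2; rewrite inE (negbTE zD1) => /nbhdP[x xD1 ezx].
have xD : x \notin D by apply: contra zD1 => xD; apply: mem_closed_nbhd xD ezx.
move: xD1; rewrite inE (negbTE xD) => /nbhdP[d' d'D exd'].
by exists d', x, z, y; rewrite exd' ezx eC ezy.
Qed.

Lemma rainbow_core_far D P v : rainbow_core D P ->
  v \notin closed_nbhd (closed_nbhd D) ->
  exists D' P', rainbow_core D' P' /\ #|D| < #|D'|.
Proof.
move=> cDP vD; have [sD D0 PD _] := cDP.
have [d [x [z [y [dD xD zD1 yD2 /and3P[exd ezx eyz]]]]]] := third_layer_path D0 vD.
have D1 : x |: D \subset closed_nbhd D := setU1_sub_closed_nbhd dD exd.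
have D2 : z |: (x |: D) \subset closed_nbhd (closed_nbhd D).
  exact: subset_trans (setU1_sub_closed_nbhd (setU11 x D) ezx) (closed_nbhdS D1).
have zD : z \notin x |: D by apply: contra zD1 => /(subsetP D1).
have yD : y \notin z |: (x |: D) by apply: contra yD2 => /(subsetP D2).
pose Q := y |: [set w | e y w].
have card3 : #|y |: (z |: (x |: D))| = #|D| + 3.
  by rewrite !cardsU1 xD zD yD /= !add1n addn3.
exists (y |: (z |: (x |: D))), (P :|: Q); split; last by rewrite card3 addnS ltnS leq_addr.
apply: (rainbow_core_grow cDP).
- apply: (rainbow_spanned_add _ yD (setU11 _ _) eyz).
  apply: (rainbow_spanned_add _ zD (setU11 _ _) ezx).
  exact: rainbow_spanned_add sD xD dD exd.
- by apply/subsetP => w wD; rewrite !inE wD !orbT.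
- exact: closed_nbhd1_sub (setU11 _ _).
- rewrite disjoint_subset; apply/subsetP => w /(subsetP PD) wD1; rewrite !inE.
  apply: contra yD2 => /predU1P[<- | eyw]; first by rewrite in_setU wD1.
  exact: mem_closed_nbhd wD1 eyw.
by rewrite card3 addKn mulnC leq_mul2l /= delta_lt_card_closed_nbhd1.
Qed.

Lemma rainbow_core_lonely D P x : rainbow_core D P -> lonely D x ->
  exists D' P', rainbow_core D' P' /\ #|D| < #|D'|.
Proof.
move=> cDP /and3P[xN1 /forall_inP sole /forall_inP noN1]; have [sD _ PD _] := cDP.
move: xN1; rewrite inE => /andP[xD xnb]; have [aD exa] := anchorP xnb.
pose Q := [set w | e x w & w \notin closed_nbhd D].
have degQ : deg e x <= #|Q|.+1.
  have sub : [set w | e x w] \subset anchor D x |: Q.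
    apply/subsetP => w; rewrite in_set => exw; rewrite in_setU1 in_set exw /=.
    case wD : (w \in D); first by rewrite (eqP (implyP (sole w wD) exw)) eqxx.
    case wnb : (w \in nbhd D); last by rewrite in_setU wD wnb orbT.
    by move: (noN1 w); rewrite in_setD wD wnb exw => /(_ isT).
  by apply: leq_trans (subset_leq_card sub) _; rewrite cardsU1 -add1n leq_add2r leq_b1.
exists (x |: D), (P :|: Q); split; last by rewrite cardsU1 xD.
apply: (rainbow_core_grow cDP).
- exact: rainbow_spanned_add sD xD aD exa.
- exact: subsetU1.
- apply: subset_trans (closed_nbhd1_sub (setU11 x D)).
  by apply/subsetP => w; rewrite !inE => /andP[-> _]; rewrite orbT.
- rewrite disjoint_subset; apply/subsetP => w /(subsetP PD) wD.
  by rewrite inE in_set wD andbF.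
rewrite cardsU1 xD add1n subSnn muln1; have := deg_ge x; move: #|Q| degQ => q; lia.
Qed.

Lemma rainbow_core_step D P : rainbow_core D P ->
  (exists D' P', rainbow_core D' P' /\ #|D| < #|D'|) \/
  two_step_dominating D /\ (forall x, ~~ lonely D x).
Proof.
move=> cDP.
have [v vD | dom] := pickP (fun v => v \notin closed_nbhd (closed_nbhd D)).
  by left; apply: rainbow_core_far cDP vD.
have [x lx | nol] := pickP (lonely D); first by left; apply: rainbow_core_lonely cDP lx.
by right; split=> [v | x]; [apply/negPn; rewrite dom | rewrite nol].
Qed.

Lemma exists_rainbow_core (s : T) : exists D P,
  [/\ rainbow_core D P, two_step_dominating D & forall x, ~~ lonely D x].
Proof.
suff grow n D P : #|T| - #|D| <= n -> rainbow_core D P -> exists D P,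
    [/\ rainbow_core D P, two_step_dominating D & forall x, ~~ lonely D x].
  exact: grow (leqnn _) (rainbow_core1 s).
elim: n D P => [|n IH] D P Dn cDP;
  have [[D' [P' [cD'P' DD']]] | [dom nol]] := rainbow_core_step cDP; try by exists D, P.
  move: Dn; rewrite leqn0 subn_eq0 => TD.
  by have := leq_trans (max_card D') TD; rewrite leqNgt DD'.
apply: IH cD'P'; move: (max_card D') Dn DD'.
by move: #|T| #|D| #|D'| => t d d'; lia.
Qed.

Lemma rc_upper_bound (s : T) rc : is_rc e rc ->
  rc * delta.+1 <= 3 * #|T| + 3 * delta.+1.
Proof.
move=> [_ rc_min]; have [D [P [[[c cD] D0 _ cardP] D_dom nol]]] := exists_rainbow_core s.
have deg_gt1 x : 1 < deg e x by apply: leq_trans delta_gt1 (deg_ge x).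
have /rc_min rc_le := rc_colourable_layered cD D_dom nol deg_gt1.
have D_gt0 : 0 < #|D| by rewrite card_gt0.
have := max_card P; move: rc_le D_gt0 cardP.
by move: #|D| #|P| #|T| => d p n; nia.
Qed.

End Growth.
End Graph.

Local Open Scope ring_scope.

Lemma gt1_of_sqrt_le (R : rcfType) (n d : nat) :
  1 + Num.sqrt (3 * n%:R + 4 : R) <= d%:R -> (1 < d)%N.
Proof.
move=> hd; rewrite -(ltr_nat R).
have n_ge0 : 0 <= n%:R :> R by apply: ler0n.
have q_ge0 := sqrtr_ge0 (3 * n%:R + 4 : R).
have q2 : Num.sqrt (3 * n%:R + 4 : R) ^+ 2 = 3 * n%:R + 4 by rewrite sqr_sqrtr //; lra.
nra.
Qed.

Theorem theorem3p3 (R : rcfType) (T : finType) (e : rel T) (delta rc prc : nat) :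
  simple_graph e -> connected_graph e ->
  is_min_degree e delta ->
  1 + Num.sqrt (3 * (#|T|%:R) + 4 : R) <= delta%:R ->
  is_rc e rc -> is_prc e prc ->
  prc%:R - rc%:R >= delta%:R - (3 * (#|T|%:R) / (delta%:R + 1) + 3) :> R.
Proof.
move=> [eC e_irr] conn [deg_ge [s deg_s]] hsqrt rc_min [[c [ec pc _]] _].
have delta_gt1 := gt1_of_sqrt_le hsqrt.
have prc_ge : delta%:R <= prc%:R :> R by rewrite ler_nat -deg_s (deg_le_colours _ ec pc).
have := rc_upper_bound eC e_irr deg_ge delta_gt1 conn s rc_min.
rewrite -(ler_nat R) !natrD !natrM -addn1 natrD => rc_le.
have d1_gt0 : 0 < delta%:R + 1 :> R by rewrite ltr_wpDl.
have : rc%:R <= 3 * #|T|%:R / (delta%:R + 1) + 3 :> R.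
  by rewrite -(ler_pM2r d1_gt0) mulrDl divfK ?gt_eqF //; lra.
lra.
Qed.
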